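(* There exists a finite-state deep sequence $S\in\{0,1\}^\infty$.
   Context: A finite-state transducer (FST) is a 4-tuple $T=(Q,\delta,\nu,q_0)$ with $Q$ a nonempty finite set of states, $\delta:Q\times\{0,1\}\to Q$, $\nu:Q\times\{0,1\}\to\{0,1\}^*$, $q_0\in Q$, every state reachable from $q_0$; $\widehat\delta(\lambda)=q_0$, $\widehat\delta(xa)=\delta(\widehat\delta(x),a)$, $T(\lambda)=\lambda$, $T(xa)=T(x)\nu(\widehat\delta(x),a)$. Fix a standard binary representation $\sigma_T$ of each FST, $|T|=|\sigma_T|$, $\mathrm{FST}^{\leq k}=\{T:|T|\le k\}$, and $\mathrm{FS}^k(x)=\min\{|p|:\exists T\in\mathrm{FST}^{\le k},\ T(p)=x\}$. For a sequence $S$, $S\upharpoonright n$ is its first $n$ bits. $S$ is finite-state deep if $(\exists\alpha>0)(\forall k\in\mathbb{N})(\exists k'\in\mathbb{N})(\exists^\infty n\in\mathbb{N})\ \mathrm{FS}^k(S\upharpoonright n)-\mathrm{FS}^{k'}(S\upharpoonright n)\ge\alpha n$. *)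

From Stdlib Require Import List Arith Reals ClassicalEpsilon.
Import ListNotations.
Open Scope R_scope.

(** States are the naturals 0 .. nq-1; [dl] is delta, [nu] is the output
    function, [q0] the start state.  Values of [dl]/[nu] on non-states are
    irrelevant junk; well-formedness is the predicate [FST_ok]. *)
Record FST := mkFST {
  nq : nat;
  dl : nat -> bool -> nat;
  nu : nat -> bool -> list bool;
  q0 : nat
}.

Definition dhat (T : FST) (x : list bool) : nat :=
  fold_left (fun q a => dl T q a) x (q0 T).

Fixpoint run_from (T : FST) (q : nat) (x : list bool) : list bool :=
  match x with
  | [] => []
  | a :: x' => nu T q a ++ run_from T (dl T q a) x'
  end.

Definition run (T : FST) (x : list bool) : list bool := run_from T (q0 T) x.

Definition FST_ok (T : FST) : Prop :=
  (0 < nq T)%nat /\ (q0 T < nq T)%nat /\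
  (forall q a, (q < nq T)%nat -> (dl T q a < nq T)%nat) /\
  (forall q, (q < nq T)%nat -> exists x, dhat T x = q).

Definition enc_nat (n : nat) : list bool := repeat true n ++ [false].
Definition enc_bits (s : list bool) : list bool := enc_nat (length s) ++ s.
Definition sigma (T : FST) : list bool :=
  enc_nat (nq T) ++ enc_nat (q0 T) ++
  flat_map (fun q => enc_nat (dl T q false) ++ enc_bits (nu T q false) ++
                     enc_nat (dl T q true) ++ enc_bits (nu T q true))
           (seq 0 (nq T)).

Definition FST_size (T : FST) : nat := length (sigma T).

Definition FS_len (k : nat) (x : list bool) (m : nat) : Prop :=
  exists T p, FST_ok T /\ (FST_size T <= k)%nat /\ run T p = x /\ length p = m.

(** FS^k(x) : the minimum, or None (= +infinity) if the set is empty. *)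
Definition FS (k : nat) (x : list bool) : option nat :=
  match excluded_middle_informative (exists m, FS_len k x m) with
  | left _ => Some (epsilon (inhabits 0%nat)
                     (fun m => FS_len k x m /\ forall m', FS_len k x m' -> (m <= m')%nat))
  | right _ => None
  end.

Definition prefix (S : nat -> bool) (n : nat) : list bool := map S (seq 0 n).

(** FS^k(x) - FS^{k'}(x) >= alpha * n, with +infinity - finite = +infinity;
    undefined/-infinity differences count as false. *)
Definition FS_gap_ge (k k' : nat) (x : list bool) (b : R) : Prop :=
  match FS k x, FS k' x with
  | Some a, Some a' => INR a - INR a' >= b
  | None, Some _ => True
  | _, None => False
  end.

Definition fs_deep (S : nat -> bool) : Prop :=
  exists alpha : R, alpha > 0 /\
    forall k : nat, exists k' : nat,
      forall N : nat, exists n : nat, (n >= N)%nat /\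
        FS_gap_ge k k' (prefix S n) (alpha * INR n).

From Pilot Require Import Defs.
From Stdlib Require Import List Arith Lia Lra Reals ClassicalEpsilon Classical.
Import ListNotations.
Local Open Scope nat_scope.

(* Call a word w incompressible at level k with cost h if no transducer of size at most k,
   started in any state with at most k bits of w already output, completes w on an input
   shorter than h.  Transducers of size at most k are determined by finitely many tables, so
   fewer than C_k * 2^h words of length 3h are compressible, and an incompressible word w_k
   exists with h_k >= k + 5.  The sequence is built in stages: stage j+1 appends
   |stage j| + 1 copies of w_k to stage j, where k = round_robin j takes every value infinitely
   often.  Cutting the input of a size-k transducer at the copy boundaries (each cut leaves at
   most k bits of the next copy already output) shows it reads h_k bits per copy, while a
   three-state transducer containing w_k prints the old prefix from a doubled-bit encoding and
   then one copy per input bit.  On such prefixes the two costs differ by at least n/12. *)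

Definition dhat_from (T : FST) (q : nat) (x : list bool) : nat :=
  fold_left (fun q a => dl T q a) x q.

Lemma run_from_app T q x y :
  run_from T q (x ++ y) = run_from T q x ++ run_from T (dhat_from T q x) y.
Proof.
  revert q; induction x as [|a x IH]; intro q; simpl; [reflexivity|].
  now rewrite IH, app_assoc.
Qed.

Lemma dhat_from_lt T q x : FST_ok T -> q < nq T -> dhat_from T q x < nq T.
Proof.
  intros (_ & _ & Hdl & _). revert q; induction x as [|a x IH]; intros q Hq; simpl; auto.
Qed.

Lemma nq_lt_size T : nq T < FST_size T.
Proof.
  unfold FST_size, Defs.sigma, enc_nat. rewrite !length_app, repeat_length. simpl. lia.
Qed.

Lemma length_flat_map_In {A B} (f : A -> list B) l x :
  In x l -> length (f x) <= length (flat_map f l).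
Proof.
  induction l as [|y l IH]; simpl; [tauto|]. rewrite length_app.
  intros [->|H]; [lia|]. specialize (IH H); lia.
Qed.

Lemma nu_length_le_size T q a : q < nq T -> length (nu T q a) <= FST_size T.
Proof.
  intro Hq. unfold FST_size, Defs.sigma. rewrite !length_app.
  assert (Hin : In q (seq 0 (nq T))) by (apply in_seq; lia).
  pose proof (length_flat_map_In (fun q => enc_nat (dl T q false) ++ enc_bits (nu T q false) ++
                     enc_nat (dl T q true) ++ enc_bits (nu T q true)) _ _ Hin) as H.
  cbv beta in H. unfold enc_bits in *. rewrite !length_app in H. destruct a; lia.
Qed.

Lemma app_eq_app_le {A} (x y u v : list A) :
  x ++ y = u ++ v -> length u <= length x -> exists m, x = u ++ m /\ v = m ++ y.
Proof.
  intros E Hle. destruct (app_eq_app x y u v E) as [l [[Hx Hv] | [Hu Hy]]]; [eauto|].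
  subst u. rewrite length_app in Hle. destruct l; [|simpl in Hle; lia].
  exists []. rewrite !app_nil_r in *. auto.
Qed.

Definition incompressible (k h : nat) (w : list bool) : Prop :=
  forall T q u c m, FST_ok T -> FST_size T <= k -> q < nq T -> length c <= k ->
    c ++ run_from T q u = w ++ m -> h <= length u.

Section SmallTransducer.
Variables (k : nat) (T : FST).
Hypotheses (T_ok : FST_ok T) (T_small : FST_size T <= k).

Lemma run_from_cut p : forall q c x y, q < nq T -> length c <= length x ->
  c ++ run_from T q p = x ++ y ->
  exists p1 p2 m, p = p1 ++ p2 /\ length m <= k /\
    c ++ run_from T q p1 = x ++ m /\ y = m ++ run_from T (dhat_from T q p1) p2.
Proof.
  induction p as [|a p IH]; intros q c x y Hq Hc E; simpl in E.
  - rewrite app_nil_r in E. subst c. rewrite length_app in Hc.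
    destruct y; [|simpl in Hc; lia].
    exists [], [], []. simpl. rewrite !app_nil_r. repeat split; lia.
  - pose proof (nu_length_le_size T q a Hq) as Hnu.
    rewrite app_assoc in E.
    destruct (le_lt_dec (length x) (length (c ++ nu T q a))) as [Hle|Hlt].
    + destruct (app_eq_app_le _ _ _ _ E Hle) as [m [Hm Hy]].
      exists [a], p, m. simpl. rewrite app_nil_r.
      repeat split; auto.
      apply (f_equal (@length bool)) in Hm.
      rewrite length_app in Hle; rewrite !length_app in Hm. lia.
    + assert (Hq' : dl T q a < nq T) by (apply T_ok; auto).
      destruct (IH _ _ _ _ Hq' (Nat.lt_le_incl _ _ Hlt) E)
        as (p1 & p2 & m & -> & Hm & E1 & Hy).
      exists (a :: p1), p2, m. simpl. rewrite app_assoc. auto.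
Qed.

Lemma concat_repeat_incompressible_lb h w : incompressible k h w -> k < length w ->
  forall r q c p, q < nq T -> length c <= k ->
  c ++ run_from T q p = concat (repeat w r) -> r * h <= length p.
Proof.
  intros Hw Hk r. induction r as [|r IH]; intros q c p Hq Hc E; [simpl; lia|].
  simpl in E.
  destruct (run_from_cut p q c w _ Hq ltac:(lia) E) as (p1 & p2 & m & -> & Hm & E1 & E2).
  pose proof (Hw T q p1 c m T_ok T_small Hq Hc E1).
  pose proof (IH _ m p2 (dhat_from_lt T q p1 T_ok Hq) Hm (eq_sym E2)).
  rewrite length_app. simpl. lia.
Qed.

End SmallTransducer.

Lemma FS_len_concat_repeat_lb k h w x r n : incompressible k h w -> k < length w ->
  FS_len k (x ++ concat (repeat w r)) n -> r * h <= n.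
Proof.
  intros Hw Hk (T & p & Hok & Hsz & Hrun & <-).
  assert (Hq0 : q0 T < nq T) by apply Hok.
  destruct (run_from_cut k T Hok Hsz p (q0 T) [] x _ Hq0 (Nat.le_0_l _) Hrun)
    as (p1 & p2 & m & -> & Hm & _ & E).
  pose proof (concat_repeat_incompressible_lb k T Hok Hsz h w Hw Hk r _ m p2
                (dhat_from_lt T _ p1 Hok Hq0) Hm (eq_sym E)).
  rewrite length_app. lia.
Qed.

Fixpoint all_bits (n : nat) : list (list bool) :=
  match n with
  | 0 => [[]]
  | S n => map (cons false) (all_bits n) ++ map (cons true) (all_bits n)
  end.

Lemma in_all_bits l : In l (all_bits (length l)).
Proof.
  induction l as [|a l IH]; simpl; auto. apply in_or_app.
  destruct a; [right|left]; apply in_map; auto.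
Qed.

Lemma length_in_all_bits n l : In l (all_bits n) -> length l = n.
Proof.
  revert l; induction n as [|n IH]; simpl; intros l Hl.
  - now destruct Hl as [<-|[]].
  - apply in_app_or in Hl.
    destruct Hl as [Hl|Hl]; apply in_map_iff in Hl as [l' [<- Hl']]; simpl; auto.
Qed.

Lemma length_all_bits n : length (all_bits n) = 2 ^ n.
Proof. induction n; simpl; auto. rewrite length_app, !length_map. lia. Qed.

Lemma NoDup_all_bits n : NoDup (all_bits n).
Proof.
  induction n as [|n IH]; simpl; [repeat constructor; simpl; tauto|].
  assert (Hcons : forall b, NoDup (map (cons b) (all_bits n))).
  { intro b. apply NoDup_map_NoDup_ForallPairs; auto.
    intros x y _ _ E. now injection E. }
  apply NoDup_app; auto.
  intros l H1 H2. apply in_map_iff in H1 as [x [<- _]], H2 as [y [E _]]. discriminate.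
Qed.

Lemma exists_bits_notin (L : list (list bool)) n :
  length L < 2 ^ n -> exists w, length w = n /\ ~ In w L.
Proof.
  intro HL. apply NNPP. intro Hno.
  assert (Hincl : incl (all_bits n) L).
  { intros l Hl. apply NNPP. intro Hout. apply Hno. exists l.
    split; auto. now apply length_in_all_bits. }
  pose proof (NoDup_incl_length (NoDup_all_bits n) Hincl). rewrite length_all_bits in *. lia.
Qed.

Definition short_bits (n : nat) : list (list bool) := flat_map all_bits (seq 0 n).

Lemma in_short_bits l n : length l < n -> In l (short_bits n).
Proof.
  intro H. apply in_flat_map. exists (length l). split; [apply in_seq; lia|apply in_all_bits].
Qed.

Lemma length_short_bits n : length (short_bits n) < 2 ^ n.
Proof.
  induction n as [|n IH]; [simpl; lia|].
  unfold short_bits in *. rewrite seq_S, flat_map_app, length_app. simpl.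
  rewrite app_nil_r, length_all_bits. lia.
Qed.

Fixpoint lists_of {A} (xs : list A) (n : nat) : list (list A) :=
  match n with
  | 0 => [[]]
  | S n => flat_map (fun x => map (cons x) (lists_of xs n)) xs
  end.

Lemma in_lists_of {A} (xs : list A) l :
  (forall x, In x l -> In x xs) -> In l (lists_of xs (length l)).
Proof.
  induction l as [|a l IH]; simpl; intros H; auto.
  apply in_flat_map. exists a. split; auto. apply in_map. auto.
Qed.

Definition move (T : FST) (q : nat) (a : bool) : nat * list bool := (dl T q a, nu T q a).

Definition table_row := ((nat * list bool) * (nat * list bool))%type.

Definition table (T : FST) : list table_row :=
  map (fun q => (move T q false, move T q true)) (seq 0 (nq T)).

Definition table_move (tb : list table_row) (q : nat) (a : bool) : nat * list bool :=
  let '(m0, m1) := nth q tb ((0, []), (0, [])) in if a then m1 else m0.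

(* Only [run_from] is ever used on this transducer, so its start state is irrelevant. *)
Definition table_fst (tb : list table_row) : FST :=
  mkFST (length tb) (fun q a => fst (table_move tb q a)) (fun q a => snd (table_move tb q a)) 0.

Lemma table_move_table T q a : q < nq T -> table_move (table T) q a = move T q a.
Proof.
  intro Hq. unfold table_move, table.
  rewrite nth_indep with (d' := (move T 0 false, move T 0 true))
    by (rewrite length_map, length_seq; auto).
  pose proof (map_nth (fun q => (move T q false, move T q true)) (seq 0 (nq T)) 0 q) as Hnth.
  cbv beta in Hnth. rewrite Hnth, seq_nth by auto. now destruct a.
Qed.

Lemma run_from_table_fst T q u : FST_ok T -> q < nq T ->
  run_from (table_fst (table T)) q u = run_from T q u.
Proof.
  intros (_ & _ & Hdl & _). revert q; induction u as [|a u IH]; intros q Hq; simpl; auto.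
  rewrite table_move_table by auto. simpl. rewrite IH; auto.
Qed.

Definition moves (k : nat) : list (nat * list bool) := list_prod (seq 0 k) (short_bits (S k)).

Definition tables (k : nat) : list (list table_row) :=
  flat_map (lists_of (list_prod (moves k) (moves k))) (seq 0 k).

Lemma table_in_tables k T : FST_ok T -> FST_size T <= k -> In (table T) (tables k).
Proof.
  intros Hok Hsz. pose proof (nq_lt_size T).
  apply in_flat_map. exists (length (table T)).
  unfold table at 1. rewrite length_map, length_seq. split; [apply in_seq; lia|].
  apply in_lists_of. intros r Hr. apply in_map_iff in Hr as [q [<- Hq]]. apply in_seq in Hq.
  assert (Hmove : forall a, In (move T q a) (moves k)).
  { intro a. pose proof (nu_length_le_size T q a ltac:(lia)).
    assert (dl T q a < nq T) by (apply Hok; lia).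
    apply in_prod; [apply in_seq; lia|apply in_short_bits; lia]. }
  apply in_prod; apply Hmove.
Qed.

Definition compressible_words (k h L : nat) : list (list bool) :=
  map (fun '(tb, q, u, c) => firstn L (c ++ run_from (table_fst tb) q u))
    (list_prod (list_prod (list_prod (tables k) (seq 0 k)) (short_bits h)) (short_bits (S k))).

Lemma incompressible_of_notin k h w :
  ~ In w (compressible_words k h (length w)) -> incompressible k h w.
Proof.
  intros Hw T q u c m Hok Hsz Hq Hc E.
  destruct (le_lt_dec h (length u)) as [|Hu]; auto. exfalso. apply Hw.
  pose proof (nq_lt_size T).
  apply in_map_iff. exists (table T, q, u, c). split.
  - rewrite run_from_table_fst, E, firstn_app, Nat.sub_diag, firstn_O, app_nil_r by auto.
    apply firstn_all.
  - repeat apply in_prod.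
    + now apply table_in_tables.
    + apply in_seq; lia.
    + now apply in_short_bits.
    + apply in_short_bits; lia.
Qed.

Lemma exists_incompressible k :
  exists hw : nat * list bool, k + 5 <= fst hw /\ length (snd hw) = 3 * fst hw /\
    incompressible k (fst hw) (snd hw).
Proof.
  set (C := length (tables k) * k * length (short_bits (S k))).
  set (h := C + k + 5).
  assert (Hcount : length (compressible_words k h (3 * h)) < 2 ^ (3 * h)).
  { unfold compressible_words. rewrite length_map, !length_prod, length_seq. fold C.
    pose proof (length_short_bits h).
    assert (C < 2 ^ h) by (apply (Nat.lt_le_trans _ (2 ^ C)); [apply Nat.pow_gt_lin_r; lia|
                                   apply Nat.pow_le_mono_r; lia]).
    replace (3 * h) with (h + h + h) by lia. rewrite !Nat.pow_add_r.
    assert (0 < 2 ^ h) by (apply Nat.neq_0_lt_0, Nat.pow_nonzero; lia). nia. }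
  destruct (exists_bits_notin _ _ Hcount) as [w [Hlen Hw]].
  exists (h, w). simpl. repeat split; [lia|auto|].
  apply incompressible_of_notin. now rewrite Hlen.
Qed.

(* State 0 reads a flag: [0] copies the next bit (via state 1), [1] enters the sink state 2,
   which prints [w] on every input bit. *)
Definition compressor (w : list bool) : FST :=
  mkFST 3 (fun q a => match q with 0 => if a then 2 else 1 | 1 => 0 | _ => 2 end)
          (fun q a => match q with 0 => [] | 1 => [a] | _ => w end) 0.

Lemma compressor_ok w : FST_ok (compressor w).
Proof.
  repeat split; simpl; try lia.
  - intros q a Hq. destruct q as [|[|q]]; [destruct a| |]; lia.
  - intros q Hq. destruct q as [|[|[|q]]]; try lia.
    + now exists [].
    + now exists [false].
    + now exists [true].
Qed.

Lemma FS_len_compressor w x r :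
  FS_len (FST_size (compressor w)) (x ++ concat (repeat w r)) (2 * length x + 1 + r).
Proof.
  exists (compressor w), (flat_map (fun b => [false; b]) x ++ true :: repeat false r).
  split; [apply compressor_ok|]. split; [lia|]. split.
  - unfold run; simpl q0. induction x as [|b x IH]; simpl.
    + induction r as [|r IH]; simpl; [reflexivity|]. now rewrite IH.
    + now rewrite IH.
  - rewrite length_app. simpl. rewrite repeat_length.
    induction x as [|b x IH]; simpl in *; lia.
Qed.

Lemma FS_len_has_least k x m : FS_len k x m ->
  exists a, FS_len k x a /\ forall m', FS_len k x m' -> a <= m'.
Proof.
  intro Hm.
  destruct (dec_inh_nat_subset_has_unique_least_element (FS_len k x)
              (fun n => classic _) (ex_intro _ m Hm)) as [a [Ha _]].
  eauto.
Qed.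

Lemma FS_len_of_FS k x a : FS k x = Some a -> FS_len k x a.
Proof.
  unfold FS. destruct excluded_middle_informative as [[m Hm]|]; [|discriminate].
  intros [= <-]. now apply (epsilon_spec (inhabits 0) _ (FS_len_has_least k x m Hm)).
Qed.

Lemma FS_le_of_FS_len k x m : FS_len k x m -> exists a, FS k x = Some a /\ a <= m.
Proof.
  intro Hm. unfold FS. destruct excluded_middle_informative as [_|Hno]; [|exfalso; eauto].
  eexists; split; [reflexivity|].
  now apply (epsilon_spec (inhabits 0) _ (FS_len_has_least k x m Hm)).
Qed.

Lemma FS_gap_ge_intro k k' x lo hi (b : R) :
  FS_len k' x hi -> (forall m, FS_len k x m -> lo <= m) -> (INR hi + b <= INR lo)%R ->
  FS_gap_ge k k' x b.
Proof.
  intros Hhi Hlo Hb. unfold FS_gap_ge.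
  destruct (FS_le_of_FS_len k' x hi Hhi) as [a' [-> Ha']].
  destruct (FS k x) as [a|] eqn:Ha; [|exact I].
  apply FS_len_of_FS, Hlo in Ha. apply le_INR in Ha, Ha'. lra.
Qed.

Section PrefixChain.
Variable chain : nat -> list bool.
Hypothesis chain_extends : forall j, exists z, chain (S j) = chain j ++ z.
Hypothesis chain_long : forall j, j <= length (chain j).

Definition chain_limit (i : nat) : bool := nth i (chain (S i)) false.

Lemma chain_prefix j j' : j <= j' -> exists z, chain j' = chain j ++ z.
Proof.
  induction 1 as [|j' _ [z Hz]]; [exists []; now rewrite app_nil_r|].
  destruct (chain_extends j') as [z' ->]. rewrite Hz, <- app_assoc. eauto.
Qed.

Lemma prefix_chain_limit j : prefix chain_limit (length (chain j)) = chain j.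
Proof.
  unfold prefix. apply nth_ext with (d := false) (d' := false).
  - now rewrite length_map, length_seq.
  - intros i Hi. rewrite length_map, length_seq in Hi.
    rewrite nth_indep with (d' := chain_limit 0) by now rewrite length_map, length_seq.
    rewrite map_nth, seq_nth by auto. simpl. unfold chain_limit.
    destruct (chain_prefix j (max j (S i)) ltac:(lia)) as [z1 E1].
    destruct (chain_prefix (S i) (max j (S i)) ltac:(lia)) as [z2 E2].
    pose proof (chain_long (S i)).
    rewrite <- (app_nth1 (chain (S i)) z2) by lia. rewrite <- E2, E1.
    now apply app_nth1.
Qed.

End PrefixChain.

Definition round_robin (j : nat) : nat := j - Nat.sqrt j * Nat.sqrt j.

Lemma round_robin_hits k N : exists j, N <= j /\ round_robin j = k.
Proof.
  exists ((N + k) * (N + k) + k). split; [nia|]. unfold round_robin.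
  rewrite (Nat.sqrt_unique _ (N + k)) by nia. lia.
Qed.

Definition incompressible_pair (k : nat) : nat * list bool :=
  proj1_sig (constructive_indefinite_description _ (exists_incompressible k)).

Lemma incompressible_pair_spec k : k + 5 <= fst (incompressible_pair k) /\
  length (snd (incompressible_pair k)) = 3 * fst (incompressible_pair k) /\
  incompressible k (fst (incompressible_pair k)) (snd (incompressible_pair k)).
Proof. exact (proj2_sig (constructive_indefinite_description _ (exists_incompressible k))). Qed.

Fixpoint stage (j : nat) : list bool :=
  match j with
  | 0 => []
  | S j =>
      stage j ++ concat (repeat (snd (incompressible_pair (round_robin j))) (length (stage j) + 1))
  end.

Lemma length_concat_repeat {A} (w : list A) r : length (concat (repeat w r)) = r * length w.
Proof. induction r as [|r IH]; simpl; auto. now rewrite length_app, IH. Qed.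

Lemma length_stage j : j <= length (stage j).
Proof.
  induction j as [|j IH]; simpl; [lia|].
  rewrite length_app, length_concat_repeat.
  pose proof (incompressible_pair_spec (round_robin j)). nia.
Qed.

Lemma stage_succ j : exists z, stage (S j) = stage j ++ z.
Proof. eexists; reflexivity. Qed.

Definition deep_seq : nat -> bool := chain_limit stage.

Lemma gap_arith n h : 5 <= h ->
  (INR (2 * n + 1 + (n + 1)) + 1 / 12 * INR (n + (n + 1) * (3 * h)) <= INR ((n + 1) * h))%R.
Proof.
  intro Hh.
  assert (Hnat : 12 * (2 * n + 1 + (n + 1)) + (n + (n + 1) * (3 * h)) <= 12 * ((n + 1) * h))
    by nia.
  revert Hnat. generalize (2 * n + 1 + (n + 1)) (n + (n + 1) * (3 * h)) ((n + 1) * h).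
  intros a b c Habc. apply le_INR in Habc. rewrite plus_INR, !mult_INR in Habc.
  replace (INR 12) with 12%R in Habc by (simpl; lra). lra.
Qed.

Theorem theorem3 : exists S : nat -> bool, fs_deep S.
Proof.
  exists deep_seq, (1/12)%R. split; [lra|]. intro k.
  destruct (incompressible_pair_spec k) as (Hh & Hw & Hinc).
  set (h := fst (incompressible_pair k)) in *. set (w := snd (incompressible_pair k)) in *.
  exists (FST_size (compressor w)). intro N.
  destruct (round_robin_hits k N) as [j [HNj Hj]].
  exists (length (stage (S j))). split; [pose proof (length_stage (S j)); lia|].
  unfold deep_seq. rewrite (prefix_chain_limit stage stage_succ length_stage).
  set (r := length (stage j) + 1).
  assert (Hstage : stage (S j) = stage j ++ concat (repeat w r)) by (simpl; now rewrite Hj).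
  rewrite Hstage, length_app, length_concat_repeat, Hw.
  apply FS_gap_ge_intro with (lo := r * h) (hi := 2 * length (stage j) + 1 + r).
  - apply FS_len_compressor.
  - intro m. apply FS_len_concat_repeat_lb; [exact Hinc|lia].
  - apply gap_arith. lia.
Qed.
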